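(* Let $\mathbb{F}$ be a field with $\operatorname{char}(\mathbb{F})\neq 2$ and let $G$ be a non-abelian group with a group involution $\ast$ and a non-identity orientation $\sigma:G\to\{\pm1\}$ such that $gg^\ast\in N=\ker\sigma$ for all $g\in G$. Then $\mathbb{F}G$ is normal with respect to the oriented group involution $\circledast$ if and only if one of the following holds: (1) $N$ is abelian, $G\setminus N\subseteq G^+$, and $n^\ast=a^{-1}na=ana^{-1}$ for all $n\in N$ and all $a\in G\setminus N$; (2) $N$ and $G$ are LC-groups, $G$ has a unique non-identity commutator $s$, there exists $g_0\in(G\setminus N)\cap\zeta(G)$ with $g_0^\ast=sg_0$, and $\ast$ is given by $g^\ast=g$ if $g\in N\cap\zeta(G)$ or $g\in(G\setminus N)\setminus\zeta(G)$, and $g^\ast=sg$ otherwise.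
   Context: A group involution on $G$ is a map $\ast:G\to G$ with $(gh)^\ast=h^\ast g^\ast$ and $(g^\ast)^\ast=g$. An orientation is a group homomorphism $\sigma:G\to\{\pm1\}$. The oriented group involution is $(\sum_g\alpha_g g)^\circledast=\sum_g\alpha_g\sigma(g)g^\ast$ on $\mathbb{F}G$ (an algebra involution because $gg^\ast\in\ker\sigma$). $\mathbb{F}G$ is normal if $\alpha\alpha^\circledast=\alpha^\circledast\alpha$ for all $\alpha\in\mathbb{F}G$. $G^+=\{g\in G:g^\ast=g\}$, $\zeta(G)$ is the center of $G$, $(g,h)=g^{-1}h^{-1}gh$, and ''unique non-identity commutator $s$'' means $\{(g,h):g,h\in G\}=\{1,s\}$. A group $H$ is an LC-group if it is non-abelian and for all $g,h\in H$: $gh=hg$ iff at least one of $g,h,gh$ lies in $\zeta(H)$. *)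

(* G is an arbitrary (possibly infinite) group, modelled by
   MathComp's [groupType] from boot/monoid.v.  *)
From HB Require Import structures.
From mathcomp Require Import all_boot all_algebra.
Set Implicit Arguments. Unset Strict Implicit. Unset Printing Implicit Defensive.
Import GRing.Theory.

Section Defs.
Variable G : groupType.

Definition is_group_involution (star : G -> G) : Prop :=
  (forall g h : G, star (g * h)%g = (star h * star g)%g) /\
  (forall g : G, star (star g) = g).

Definition is_orientation (sigma : G -> int) : Prop :=
  (forall g : G, sigma g = 1%R \/ sigma g = (-1)%R) /\
  (forall g h : G, sigma (g * h)%g = (sigma g * sigma h)%R).

Definition kerO (sigma : G -> int) : pred G := fun g => sigma g == 1%R.

Definition abelian_on (H : pred G) : Prop :=
  forall g h, H g -> H h -> (g * h)%g = (h * g)%g.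

Definition center_of (H : pred G) (z : G) : Prop :=
  H z /\ (forall y, H y -> (z * y)%g = (y * z)%g).

Definition LC_group (H : pred G) : Prop :=
  ~ abelian_on H /\
  forall g h, H g -> H h ->
    ((g * h)%g = (h * g)%g <->
     (center_of H g \/ center_of H h \/ center_of H (g * h)%g)).

Definition unique_nonid_commutator (s : G) : Prop :=
  s != 1%g /\ (forall g h : G, commg g h = 1%g \/ commg g h = s) /\
  (exists g h : G, commg g h = s).

(* The group algebra F G: elements are formal finite linear combinations,
   represented by lists of (group element, coefficient) pairs. *)
Variable F : fieldType.
Definition FG := seq (G * F).

Definition coef (a : FG) (x : G) : F := (\sum_(p <- a | p.1 == x) p.2)%R.

Definition FGmul (a b : FG) : FG :=
  [seq ((p.1 * q.1)%g, (p.2 * q.2)%R) | p <- a, q <- b].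

Definition oinv (star : G -> G) (sigma : G -> int) (a : FG) : FG :=
  [seq (star p.1, (p.2 * (sigma p.1)%:~R)%R) | p <- a].

(* F G is normal w.r.t. the oriented involution: equality in F G is equality
   of coefficient functions *)
Definition FG_normal (star : G -> G) (sigma : G -> int) : Prop :=
  forall a : FG, forall x : G,
    coef (FGmul a (oinv star sigma a)) x = coef (FGmul (oinv star sigma a) a) x.

End Defs.

From HB Require Import structures.
From mathcomp Require Import all_boot all_algebra.
From mathcomp Require Import ring.
From Stdlib Require Import Classical.
Import GRing.Theory.
Set Implicit Arguments. Unset Strict Implicit. Unset Printing Implicit Defensive.

(* Expanding the coefficients of alpha alpha^* -
   alpha^* alpha over pairs of monomials and polarizing (char F <> 2) shows
   that FG is normal iff, for all non-commuting g, h, (gh)^* = hg when gh is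
   in N and (gh)^* = gh otherwise.
   If N is abelian, applying this to n a and a (n a), for n in N and a outside
   N that do not commute, gives a^* = a and n^* = a^-1 n a; a partner n0 in N
   not commuting with a transfers the second identity to the n commuting
   with a.
   If N is not abelian, applying it to x y and x (x y) gives x^* = [x, y] x
   for non-commuting x, y in N.  All these commutators equal one central
   involution s, which turns out to be the only non-trivial commutator of G;
   this yields the value of ^* on each of the four classes (in N or not,
   central or not), and comparing (gh)^* with h^* g^* for commuting
   non-central g, h gives the LC property. *)

Local Open Scope group_scope.

Lemma forall_or_counterexample (T : Type) (P Q : T -> Prop) :
  (forall y, P y -> Q y) \/ exists2 y, P y & ~ Q y.
Proof.
case: (classic (exists2 y, P y & ~ Q y)) => [|none]; [by right | left=> y Py].
by apply: NNPP => nQ; apply: none; exists y.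
Qed.

Section Commutation.
Variable G : groupType.
Implicit Types x y s : G.

Definition central x := forall y, commute x y.

Lemma noncommute_sym x y : ~ commute x y -> ~ commute y x.
Proof. by move=> nc /commute_sym. Qed.

Lemma commute_mulgl x y : commute x (x * y) <-> commute x y.
Proof. by rewrite /commute -mulgA; split=> [/mulgI|->]. Qed.

Lemma commute_mulgr x y : commute (x * y) y <-> commute x y.
Proof. by rewrite /commute mulgA; split=> [/mulIg|->]. Qed.

Lemma not_abelian_on (P : G -> bool) : ~ abelian_on P ->
  exists2 x, P x & exists2 y, P y & ~ commute x y.
Proof.
move=> nab; apply: NNPP => none; apply: nab => x y Px Py.
by apply: NNPP => nc; apply: none; exists x => //; exists y.
Qed.

Lemma commgMl x y : [~ x, x * y] = [~ x, y].
Proof. by rewrite /commg /conjg invgM !mulgA mulgVK. Qed.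

Lemma commMgJ x y z : [~ x * y, z] = [~ x, z] ^ y * [~ y, z].
Proof. by rewrite /commg /conjg !invgM !mulgA !mulgK. Qed.

Lemma center_ofT x : center_of (fun _ : G => true) x <-> central x.
Proof. by split=> [[_ cx] y|cx]; [apply: cx | split=> // y _; apply: cx]. Qed.

Lemma commg_conj_eq1 x y z : ([~ x ^ z, y ^ z] == 1) = ([~ x, y] == 1).
Proof. by rewrite -conjRg conjg_eq1. Qed.

Section UniqueCommutator.
Variable s : G.
Hypothesis Hs : unique_nonid_commutator s.

Lemma noncommute_commg x y : ~ commute x y -> [~ x, y] = s.
Proof. by case: Hs => _ [/(_ x y) [/eqP/commgP|] //]. Qed.

Lemma unique_commutator_central : central s.
Proof.
case: Hs => s1 [_ [x [y exy]]] z.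
have nc : ~ commute (x ^ z) (y ^ z).
  by move/commgP; rewrite commg_conj_eq1 exy (negbTE s1).
have sz : s ^ z = s by rewrite -{1}exy conjRg (noncommute_commg nc).
by rewrite /commute -{2}sz mulVKg.
Qed.

Lemma unique_commutator_invol : s * s = 1.
Proof.
case: Hs => s1 [_ [x [y exy]]].
have nc : ~ commute y x by move/commgP; rewrite -invgR invg_eq1 exy (negbTE s1).
by rewrite -{1}exy -(noncommute_commg nc) -invgR mulVg.
Qed.

End UniqueCommutator.
End Commutation.

Section OrientedInvolution.
Variables (G : groupType) (star : G -> G) (sigma : G -> int).
Hypothesis star_invol : is_group_involution star.
Hypothesis sigma_orient : is_orientation sigma.
Hypothesis ker_mul_star : forall g : G, kerO sigma (g * star g).
Local Notation N := (kerO sigma).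
Implicit Types g h x y n a z : G.

Lemma starM x y : star (x * y) = star y * star x. Proof. by case: star_invol. Qed.
Lemma starK : involutive star. Proof. by case: star_invol. Qed.

Lemma star1 : star 1 = 1.
Proof. by apply: (mulgI (star 1)); rewrite -starM !mulg1. Qed.

Lemma starV x : star x^-1 = (star x)^-1.
Proof. by apply/esym/mulg1_eq; rewrite -starM mulVg star1. Qed.

Lemma kerM x y : N (x * y) = (N x == N y).
Proof.
case: sigma_orient => sv sM; rewrite /kerO sM.
by case: (sv x) => ->; case: (sv y) => ->.
Qed.

Lemma ker1 : N 1.
Proof. by have := kerM 1 1; rewrite mulg1; case: (N 1). Qed.

Lemma kerV x : N x^-1 = N x.
Proof. by have := kerM x x^-1; rewrite mulgV ker1; case: (N x); case: (N x^-1). Qed.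

Lemma ker_star x : N (star x) = N x.
Proof.
have := kerM x (star x); rewrite ker_mul_star.
by case: (N x); case: (N (star x)).
Qed.

Lemma kerMC x y : N (y * x) = N (x * y).
Proof. by rewrite !kerM eq_sym. Qed.

Lemma ker_mulVg a y : ~~ N a -> ~~ N y -> N (a^-1 * y).
Proof. by rewrite kerM kerV => /negbTE -> /negbTE ->. Qed.

Definition normality_criterion := forall g h, ~ commute g h ->
  star (g * h) = if N (g * h) then h * g else g * h.

Definition LC_star_formula (s : G) : Prop :=
  forall g : G,
    let Zg := center_of (fun _ => true) g in
    let Ng := N g in
    (((Ng /\ Zg) \/ (~ Ng /\ ~ Zg)) -> star g = g) /\
    (~ ((Ng /\ Zg) \/ (~ Ng /\ ~ Zg)) -> star g = s * g).

Definition kernel_abelian_form : Prop :=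
  abelian_on N /\
  (forall g, ~~ N g -> star g = g) /\
  (forall n a, N n -> ~~ N a -> star n = a^-1 * n * a /\ star n = a * n * a^-1).

Definition LC_form : Prop :=
  LC_group N /\ LC_group (fun _ : G => true) /\
  exists s : G, unique_nonid_commutator s /\
    (exists g0 : G, ~~ N g0 /\ center_of (fun _ => true) g0 /\ star g0 = s * g0) /\
    LC_star_formula s.

Lemma LC_star_formulaP s : LC_star_formula s <->
  (forall u, central u -> star u = if N u then u else s * u) /\
  (forall u, ~ central u -> star u = if N u then s * u else u).
Proof.
split=> [f | [fc fnc] g /=].
  split=> u cu; case: (f u); rewrite /= center_ofT; case: (N u) => f1 f2.
  - by apply: f1; left.
  - by apply: f2; case=> [[]|[_]].
  - by apply: f2; case=> [[_]|[]].
  - by apply: f1; right.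
case: (classic (central g)) => cg; [rewrite fc | rewrite fnc] => //;
  move: cg; rewrite -center_ofT => cg; case: (N g); split=> // H.
- by case: H; left.
- by case: H => [[]|[_]].
- by case: H => [[_]|[]].
- by case: H; right.
Qed.

Lemma central_of_outer_centralizing a : ~~ N a ->
  (forall n, N n -> commute n a) -> central a.
Proof.
move=> Na caN y; case Ny: (N y); first exact/commute_sym/caN.
rewrite -(mulVKg a y); apply: commuteM; first exact: commute_refl.
by apply/commute_sym/caN/ker_mulVg; rewrite ?Ny.
Qed.

Lemma abelian_of_outer_centralizing a : abelian_on N -> ~~ N a ->
  (forall n, N n -> commute n a) -> abelian_on (fun _ : G => true).
Proof.
move=> abN Na caN; have ca := central_of_outer_centralizing Na caN.
have cN n : N n -> central n.
  move=> Nn y; case Ny: (N y); first exact: abN.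
  rewrite -(mulVKg a y); apply: commuteM; first exact: caN.
  by apply: abN => //; apply: ker_mulVg; rewrite ?Ny.
move=> x y _ _; case Nx: (N x); first exact: cN.
apply: commute_sym; rewrite -(mulVKg a x); apply: commuteM.
  exact: commute_sym (ca y).
by apply/commute_sym/cN/ker_mulVg; rewrite ?Nx.
Qed.

Definition twist x := star x * x^-1.

Lemma twistK x : star x = twist x * x.
Proof. by rewrite /twist mulgVK. Qed.

Section Criterion.
Hypothesis crit : normality_criterion.

Lemma star_mul_ker g h : ~ commute g h -> N (g * h) -> star (g * h) = h * g.
Proof. by move=> nc Ngh; rewrite crit // Ngh. Qed.

Lemma star_mul_outer g h : ~ commute g h -> ~~ N (g * h) -> star (g * h) = g * h.
Proof. by move=> nc /negbTE Ngh; rewrite crit // Ngh. Qed.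

Lemma star_outer_noncomm n a : N n -> ~~ N a -> ~ commute n a ->
  star a = a /\ star n = a^-1 * n * a.
Proof.
move=> Nn Na nc.
have na_fixed : star (n * a) = n * a.
  by apply: star_mul_outer; rewrite // kerM Nn (negbTE Na).
have a_na : star (a * (n * a)) = n * a * a.
  apply: star_mul_ker; first by move/commute_sym/commute_mulgr.
  by rewrite !kerM Nn (negbTE Na).
rewrite starM na_fixed in a_na.
have fa : star a = a by apply: (mulgI (n * a)).
by split=> //; rewrite -mulgA -na_fixed starM fa mulKg.
Qed.

Section AbelianKernel.
Hypothesis nonabelian : ~ abelian_on (fun _ : G => true).
Hypothesis abN : abelian_on N.

Lemma noncomm_ker_exists a : ~~ N a -> exists2 n, N n & ~ commute n a.
Proof.
move=> Na; case: (forall_or_counterexample N (commute^~ a)) => // caN.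
by case: nonabelian; apply: abelian_of_outer_centralizing caN.
Qed.

Lemma star_outer_fixed a : ~~ N a -> star a = a.
Proof.
move=> Na; have [n Nn nc] := noncomm_ker_exists Na.
by case: (star_outer_noncomm Nn Na nc).
Qed.

Lemma star_ker_conj n a : N n -> ~~ N a -> star n = a^-1 * n * a.
Proof.
move=> Nn Na; case: (n * a =P a * n) => [c|nc]; last first.
  by case: (star_outer_noncomm Nn Na nc).
have [n0 Nn0 nc0] := noncomm_ker_exists Na.
have nc1 : ~ commute (n0 * n) a.
  by move=> c1; apply: nc0; apply: (mulIg n); rewrite -mulgA -c mulgA c1 mulgA.
have Nn0n : N (n0 * n) by rewrite kerM Nn0 Nn.
have [_ e1] := star_outer_noncomm Nn0n Na nc1.
have [_ e0] := star_outer_noncomm Nn0 Na nc0.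
have Nconj : N (a^-1 * n0 * a) by rewrite !kerM kerV Nn0; case: (N a).
rewrite starM e0 abN ?ker_star // in e1.
by apply: (mulgI (a^-1 * n0 * a)); rewrite e1 !mulgA mulgK.
Qed.

Lemma criterion_kernel_abelian : kernel_abelian_form.
Proof.
split=> //; split=> [|n a Nn Na]; first exact: star_outer_fixed.
split; first exact: star_ker_conj.
by rewrite (star_ker_conj (a := a^-1)) ?invgK ?kerV.
Qed.

End AbelianKernel.

Section NonabelianKernel.

Lemma star_ker_noncomm x y : N x -> N y -> ~ commute x y -> star x = [~ x, y] * x.
Proof.
move=> Nx Ny nc.
have xy : star (x * y) = y * x by apply: star_mul_ker; rewrite // kerM Nx Ny.
have x_xy : star (x * (x * y)) = x * y * x.
  by apply: star_mul_ker; [move/commute_mulgl | rewrite !kerM Nx Ny].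
rewrite starM xy in x_xy.
by apply: (mulgI (y * x)); rewrite x_xy /commg /conjg !mulgA mulgK mulgV mul1g.
Qed.

Lemma commute_commg_ker x y : N x -> N y -> ~ commute x y -> commute [~ x, y] x.
Proof.
move=> Nx Ny nc.
have nc' := noncommute_sym nc.
have yx : star (y * x) = x * y by apply: star_mul_ker; rewrite // kerM Nx Ny.
rewrite starM (star_ker_noncomm Nx Ny nc) (star_ker_noncomm Ny Nx nc') in yx.
rewrite -[[~ y, x]]invgR in yx.
have e : [~ x, y] * x * [~ x, y]^-1 = x by apply: (mulIg y); rewrite -yx !mulgA.
by apply: (mulIg [~ x, y]^-1); rewrite e mulgK.
Qed.

Lemma commg_ker_invol x y : N x -> N y -> ~ commute x y -> [~ x, y] * [~ x, y] = 1.
Proof.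
move=> Nx Ny nc.
have NxV : N x^-1 by rewrite kerV.
have ncV : ~ commute y x^-1 by move/commuteV; rewrite invgK => /commute_sym.
have cx := commute_commg_ker Nx Ny nc.
have sx := star_ker_noncomm Nx Ny nc.
have e1 : [~ x^-1, y] = [~ x, y]^-1.
  apply: (mulIg x^-1); rewrite -(star_ker_noncomm NxV Ny (noncommute_sym ncV)).
  by rewrite starV sx invgM -!invgM cx.
have e2 : [~ y, x^-1] = [~ x, y]^-1.
  apply: (mulIg y); rewrite -(star_ker_noncomm Ny NxV ncV).
  by rewrite (star_ker_noncomm Ny Nx (noncommute_sym nc)) -invgR.
by rewrite -invgR e1 invgK in e2; rewrite {1}e2 mulVg.
Qed.

Lemma twist_ker_noncomm x y : N x -> N y -> ~ commute x y ->
  twist x = [~ x, y] /\ twist y = [~ x, y].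
Proof.
move=> Nx Ny nc; rewrite /twist (star_ker_noncomm Nx Ny nc).
rewrite (star_ker_noncomm Ny Nx (noncommute_sym nc)) !mulgK -[[~ y, x]]invgR.
by split=> //; apply: mulg1_eq; exact: commg_ker_invol.
Qed.

Lemma twist_ker_eq x y : N x -> N y -> ~ commute x y -> twist x = twist y.
Proof. by move=> Nx Ny nc; case: (twist_ker_noncomm Nx Ny nc) => -> ->. Qed.

Variables m k : G.
Hypotheses (Nm : N m) (Nk : N k) (ncmk : ~ commute m k).
Local Notation s := [~ m, k].

(* If x and y both commute with m and k, then x m commutes with neither y nor k,
   which links the twist of y to that of k. *)
Lemma twist_ker_s x y : N x -> N y -> ~ commute x y -> twist x = s.
Proof.
move=> Nx Ny nc.
have [tm tk] := twist_ker_noncomm Nm Nk ncmk.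
case: (x * m =P m * x) => [xm|/(twist_ker_eq Nx Nm) -> //].
case: (x * k =P k * x) => [xk|/(twist_ker_eq Nx Nk) -> //].
rewrite (twist_ker_eq Nx Ny nc).
case: (y * m =P m * y) => [ym|/(twist_ker_eq Ny Nm) -> //].
case: (y * k =P k * y) => [yk|/(twist_ker_eq Ny Nk) -> //].
have Nxm : N (x * m) by rewrite kerM Nx Nm.
have nc1 : ~ commute (x * m) y.
  by move=> e; apply: nc; apply: (mulIg m); rewrite -mulgA ym mulgA e mulgA.
have nc2 : ~ commute (x * m) k.
  by move=> e; apply: ncmk; apply: (mulgI x); rewrite mulgA e mulgA -xk -mulgA.
by rewrite -(twist_ker_eq Nxm Ny nc1) (twist_ker_eq Nxm Nk nc2).
Qed.

Lemma ker_s : N s.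
Proof. by rewrite /commg /conjg !kerM !kerV Nm Nk. Qed.

Lemma s_invol : s * s = 1.
Proof. exact: commg_ker_invol. Qed.

Lemma s_neq1 : s != 1.
Proof. by apply/negP => /commgP. Qed.

Lemma commute_ker_s n : N n -> commute n s.
Proof.
move=> Nn; case: (forall_or_counterexample N (commute n)) => [cn|[y Ny nc]].
  exact/cn/ker_s.
have [tn _] := twist_ker_noncomm Nn Ny nc.
by rewrite -(twist_ker_s Nn Ny nc) tn; apply/commute_sym/commute_commg_ker.
Qed.

Lemma star_ker_center z : N z -> (forall y, N y -> commute z y) -> star z = z.
Proof.
move=> Nz cz.
have Nzm : N (z * m) by rewrite kerM Nz Nm.
have nc : ~ commute (z * m) k.
  by move=> e; apply: ncmk; apply: (mulgI z); rewrite mulgA e mulgA -(cz k Nk) -mulgA.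
have e := twistK (z * m).
rewrite (twist_ker_s Nzm Nk nc) starM (twistK m) (twist_ker_s Nm Nk ncmk) (cz m Nm) in e.
by apply: (mulgI (s * m)); rewrite e mulgA.
Qed.

Lemma central_ker_center z : N z -> (forall y, N y -> commute z y) -> central z.
Proof.
move=> Nz cz a; case Na: (N a); first exact: cz.
case: (z * a =P a * z) => // nc.
have [_ e] := star_outer_noncomm Nz (negbT Na) nc.
by rewrite (star_ker_center Nz cz) in e; rewrite /commute {2}e !mulgA mulgV mul1g.
Qed.

Lemma s_central : central s.
Proof. by apply: central_ker_center ker_s _ => y /commute_ker_s/commute_sym. Qed.

Lemma star_noncentral u : ~ central u -> star u = if N u then s * u else u.
Proof.
move=> ncu; case Nu: (N u).
  case: (forall_or_counterexample N (commute u)) => [cu|[y Ny nc]].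
    by case: ncu; apply: central_ker_center.
  by rewrite twistK (twist_ker_s Nu Ny nc).
case: (forall_or_counterexample N (commute^~ u)) => [cu|[n Nn nc]].
  by case: ncu; apply: central_of_outer_centralizing; rewrite ?Nu.
by case: (star_outer_noncomm Nn (negbT Nu) nc).
Qed.

Lemma star_central u : central u -> star u = if N u then u else s * u.
Proof.
move=> cu; case Nu: (N u); first by apply: star_ker_center => // y _; apply: cu.
have Num : ~~ N (u * m) by rewrite kerM Nu Nm.
have ncum : ~ central (u * m).
  by move=> c; apply: ncmk; apply: (mulgI u); rewrite mulgA (c k) mulgA -(cu k) -mulgA.
have := star_noncentral ncum.
rewrite (negbTE Num) starM (twistK m) (twist_ker_s Nm Nk ncmk).
rewrite (cu m) (s_central m) -mulgA.
move/mulgI => su; by rewrite -[star u]mul1g -s_invol -mulgA su.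
Qed.

Lemma commg_ker_s x y : N x -> ~ commute x y -> [~ x, y] = s.
Proof.
move=> Nx nc; case Ny: (N y).
  by rewrite -(twist_ker_s Nx Ny nc); case: (twist_ker_noncomm Nx Ny nc).
have ncx : ~ central x by move/(_ y).
have [_ e] := star_outer_noncomm Nx (negbT Ny) nc.
rewrite star_noncentral // Nx in e.
by rewrite /commg /conjg [y^-1 * _]mulgA -e (s_central x) mulKg.
Qed.

Lemma noncommute_commg_s x y : ~ commute x y -> [~ x, y] = s.
Proof.
move=> nc; case Nx: (N x); first exact: commg_ker_s.
have inv_s : s^-1 = s := mulg1_eq s_invol.
have commg_s z : N z -> ~ commute x z -> [~ x, z] = s.
  by move=> Nz ncz; rewrite -invgR (commg_ker_s Nz (noncommute_sym ncz)) inv_s.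
case Ny: (N y); first exact: commg_s.
have Nz : N (x^-1 * y) by apply: ker_mulVg; rewrite ?Nx ?Ny.
rewrite -[y](mulVKg x) commgMl; apply: commg_s => //.
by move/commute_mulgl; rewrite mulVKg.
Qed.

Lemma s_unique_commutator : unique_nonid_commutator s.
Proof.
split; first exact: s_neq1.
split; last by exists m, k.
move=> x y; case: (x * y =P y * x) => [/commgP/eqP|/noncommute_commg_s].
  by left.
by right.
Qed.

Lemma central_mul_noncentral g h : commute g h -> ~ central g -> ~ central h ->
  central (g * h).
Proof.
move=> cgh ncg nch; apply: NNPP => ncgh.
have := star_noncentral ncgh.
rewrite starM (star_noncentral ncg) (star_noncentral nch) kerM.
case: (N g); case: (N h) => /= e; apply: (negP s_neq1); apply/eqP;
  apply: (mulIg (g * h)); rewrite mul1g.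
- rewrite -e -mulgA [h * (s * g)]mulgA -(s_central h) -[s * h * g]mulgA.
  by rewrite [s * (s * _)]mulgA s_invol mul1g cgh.
- by rewrite -[in RHS]e [h * (s * g)]mulgA -(s_central h) -[s * h * g]mulgA cgh.
- by rewrite -[in RHS]e -[s * h * g]mulgA cgh.
- by rewrite -e cgh.
Qed.

Lemma central_outer_exists a0 : ~~ N a0 -> exists2 g0, ~~ N g0 & central g0.
Proof.
move=> Na0.
have ncm : ~ central m by move/(_ k).
have nck : ~ central k by move/(_ m)/commute_sym.
have outer x : N x -> ~~ N (a0 * x) by move=> Nx; rewrite kerM Nx; case: (N a0) Na0.
case: (classic (central a0)) => [ca0|nca0]; first by exists a0.
case: (a0 * m =P m * a0) => [am|nam].
  by exists (a0 * m); [exact: outer | exact: central_mul_noncentral].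
case: (a0 * k =P k * a0) => [ak|nak].
  by exists (a0 * k); [exact: outer | exact: central_mul_noncentral].
(* Otherwise [a0 m, k] = [a0, k]^m [m, k] = s s = 1, and a0 m k is central. *)
have a0m_k : commute (a0 * m) k.
  apply/commgP.
  by rewrite commMgJ (noncommute_commg_s nak) /conjg (s_central m) mulKg s_invol.
exists (a0 * m * k); first by rewrite -mulgA outer // kerM Nm Nk.
by apply: central_mul_noncentral => // /(_ m)/commute_mulgr.
Qed.

Lemma LC_whole : LC_group (fun _ : G => true).
Proof.
split; first by move/(_ m k isT isT).
move=> g h _ _; rewrite !center_ofT; split.
  move=> cgh; case: (classic (central g)) => [|ncg]; first by left.
  case: (classic (central h)) => [|nch]; first by right; left.
  by right; right; apply: central_mul_noncentral.
case=> [cg|[ch|cgh]]; [exact: cg | exact/commute_sym/ch |].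
exact/commute_mulgl/commute_sym/cgh.
Qed.

Lemma LC_ker : LC_group N.
Proof.
split; first by move/(_ m k Nm Nk).
move=> g h Ng Nh; split.
  move=> cgh; case: (forall_or_counterexample N (commute g)) => [cg|[y Ny ncg]].
    by left; split.
  case: (forall_or_counterexample N (commute h)) => [ch|[z Nz nch]].
    by right; left; split.
  right; right; split=> [|y' _]; first by rewrite kerM Ng Nh.
  by apply: central_mul_noncentral => // [/(_ y) | /(_ z)].
case=> [[_ cg]|[[_ ch]|[_ cgh]]]; first exact: cg.
  exact/commute_sym/ch.
exact/commute_mulgl/commute_sym/cgh.
Qed.

Lemma criterion_LC_form a0 : ~~ N a0 -> LC_form.
Proof.
move=> Na0; split; first exact: LC_ker.
split; first exact: LC_whole.
exists s; split; first exact: s_unique_commutator.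
split; last first.
  by apply/LC_star_formulaP; split; [exact: star_central | exact: star_noncentral].
have [g0 Ng0 cg0] := central_outer_exists Na0.
by exists g0; rewrite center_ofT star_central // (negbTE Ng0).
Qed.

End NonabelianKernel.

End Criterion.

Lemma kernel_abelian_form_criterion : kernel_abelian_form -> normality_criterion.
Proof.
case=> abN [fix_outer conj_ker] g h nc.
case Ng: (N g); case Nh: (N h); rewrite kerM Ng Nh /=.
- by case: nc; apply: abN; rewrite ?Ng ?Nh.
- rewrite starM (fix_outer h) ?Nh //; have [-> _] := conj_ker g h Ng (negbT Nh).
  by rewrite !mulgA mulgV mul1g.
- rewrite starM (fix_outer g) ?Ng //; have [_ ->] := conj_ker h g Nh (negbT Ng).
  by rewrite mulgVK.
have Ngh : N (g * h) by rewrite kerM Ng Nh.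
by have [-> _] := conj_ker (g * h) g Ngh (negbT Ng); rewrite mulKg.
Qed.

Lemma LC_form_criterion : LC_form -> normality_criterion.
Proof.
case=> _ [_ [s [us [_ /LC_star_formulaP [_ fnc]]]]] g h nc.
have sc := unique_commutator_central us.
have egh : g * h = h * g * s by rewrite (commgC g h) (noncommute_commg us nc).
have ncg : ~ central g by move/(_ h).
have nch : ~ central h by move/(_ g)/commute_sym.
rewrite starM (fnc g ncg) (fnc h nch) kerM.
case: (N g); case: (N h) => /=.
- by rewrite -mulgA (mulgA h) -(sc h) -mulgA mulgA (unique_commutator_invol us) mul1g.
- by rewrite (sc g) mulgA -egh.
- by rewrite -mulgA (sc (h * g)) -egh.
- by [].
Qed.

End OrientedInvolution.

Section Polarization.
Local Open Scope ring_scope.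
Variable F : fieldType.
Hypothesis two_neq0 : (2%:R : F) != 0.

Lemma polarization (T : Type) (D : T -> T -> F) :
  (forall a : seq (T * F), \sum_(p <- a) \sum_(q <- a) p.2 * q.2 * D p.1 q.1 = 0) <->
  (forall g h, D g h + D h g = 0).
Proof.
split=> [D0 g h | Dsym a].
  have := D0 [:: (g, 1); (h, 1)]; have := D0 [:: (g, 1)]; have := D0 [:: (h, 1)].
  rewrite !big_cons !big_nil /= !mul1r !addr0 => -> ->.
  by rewrite add0r addr0.
apply: (mulfI two_neq0); rewrite mulr0 mulr_natl mulr2n {2}exchange_big -big_split.
rewrite big1 // => p _; rewrite -big_split big1 // => q _ /=.
by rewrite [q.2 * _]mulrC -mulrDr Dsym mulr0.
Qed.

Lemma bool_sub_eq1 (b c : bool) : (b%:R - c%:R - 1 : F) = 0 -> b.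
Proof.
case: b => //; case: c => /= /eqP; rewrite ?subr0 ?sub0r.
  by rewrite -opprD oppr_eq0 -mulr2n (negbTE two_neq0).
by rewrite oppr_eq0 oner_eq0.
Qed.

End Polarization.

Section GroupAlgebra.
Local Open Scope ring_scope.
Variables (F : fieldType) (G : groupType) (star : G -> G) (sigma : G -> int).
Hypothesis star_invol : is_group_involution star.
Hypothesis sigma_orient : is_orientation sigma.
Hypothesis ker_mul_star : forall g : G, kerO sigma (g * star g)%g.
Hypothesis char_F : ~~ (2 \in [pchar F]).
Local Notation N := (kerO sigma).
Implicit Types g h x u v : G.

Lemma two_neq0 : (2%:R : F) != 0.
Proof. by apply: contraNneq char_F => two0; rewrite inE /= two0 eqxx. Qed.

Definition sg g : F := (sigma g)%:~R.

Lemma sg_ker g : sg g = if N g then 1 else -1.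
Proof. by rewrite /sg /kerO; case: sigma_orient => sv _; case: (sv g) => ->. Qed.

Lemma sg_pair g h : sg h = sg (g * h)%g * sg g.
Proof.
case: sigma_orient => sv sM.
rewrite /sg -intrM sM; congr (_%:~R).
by case: (sv g) => ->; rewrite ?mul1r ?mulr1 // mulN1r mulrN1 opprK.
Qed.

Lemma sg_star g : sg (star g) = sg g.
Proof. by rewrite !sg_ker (ker_star sigma_orient ker_mul_star). Qed.

Lemma sg_neq0 g : sg g != 0.
Proof. by rewrite sg_ker; case: (N g); rewrite ?oppr_eq0 oner_eq0. Qed.

Definition defect x u v : F :=
  sg v * ((u * star v)%g == x)%:R - sg u * ((star u * v)%g == x)%:R.

Lemma coef_normal_defect (a : FG G F) x :
  coef (FGmul a (oinv star sigma a)) x - coef (FGmul (oinv star sigma a) a) x =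
  \sum_(p <- a) \sum_(q <- a) p.2 * q.2 * defect x p.1 q.1.
Proof.
rewrite /coef /FGmul big_mkcond [X in _ - X]big_mkcond !big_allpairs_dep /=.
rewrite /oinv !big_map -sumrB.
apply: eq_bigr => p _; rewrite big_map -sumrB; apply: eq_bigr => q _ /=.
by rewrite /defect /sg; case: (_ == x); case: (_ == x) => /=; ring.
Qed.

Lemma pair_defect g h x :
  defect x g (star h) + defect x (star h) g =
  sg h * (((g * h)%g == x)%:R - ((h * g)%g == x)%:R) +
  sg g * ((star (g * h)%g == x)%:R - (star (h * g)%g == x)%:R).
Proof.
rewrite /defect !(starK star_invol) -!(starM star_invol) !sg_star; ring.
Qed.

Lemma defect_pairs_criterion :
  (forall g h x, defect x g h + defect x h g = 0) <-> normality_criterion star sigma.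
Proof.
split=> [D0 g h nc | crit g h x].
  have ngh : ((g * h)%g == (h * g)%g) = false by apply/eqP.
  have ehg : ((h * g)%g == (g * h)%g) = false by rewrite eq_sym.
  case Ngh: (N (g * h)%g).
  - apply/eqP/(bool_sub_eq1 two_neq0 (c := star (h * g)%g == (h * g)%g)).
    apply: (mulfI (sg_neq0 g)); have := D0 g (star h) (h * g)%g.
    by rewrite pair_defect (sg_pair g h) sg_ker Ngh ngh eqxx /= mulr0 => <-; ring.
  - apply/eqP/(bool_sub_eq1 two_neq0 (c := star (h * g)%g == (g * h)%g)).
    apply: (mulfI (sg_neq0 g)); have := D0 g (star h) (g * h)%g.
    by rewrite pair_defect (sg_pair g h) sg_ker Ngh ehg eqxx /= mulr0 => <-; ring.
rewrite -[h](starK star_invol) pair_defect; move: (star h) => k.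
case: (g * k =P k * g)%g => [c|nc]; first by rewrite c !subrr !mulr0 addr0.
rewrite (crit g k nc) (crit k g (noncommute_sym nc)) (kerMC sigma_orient g k).
by rewrite (sg_pair g k) sg_ker; case: (N (g * k)%g); ring.
Qed.

Lemma FG_normal_iff_criterion : FG_normal F star sigma <-> normality_criterion star sigma.
Proof.
rewrite -defect_pairs_criterion; split=> [normal g h x | D0 a x].
  apply: (polarization two_neq0 (defect x)).1 => a.
  by rewrite -coef_normal_defect normal subrr.
apply/eqP; rewrite -subr_eq0 coef_normal_defect; apply/eqP.
exact: (polarization two_neq0 (defect x)).2.
Qed.

End GroupAlgebra.

Theorem theorem5 (F : fieldType) (G : groupType) (star : G -> G) (sigma : G -> int) :
  ~~ (2 \in [pchar F])%R ->
  ~ abelian_on (fun _ : G => true) ->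
  is_group_involution star ->
  is_orientation sigma ->
  (exists g : G, sigma g != 1%R) ->
  (forall g : G, kerO sigma (g * star g)%g) ->
  FG_normal F star sigma <->
  ( (* (1) *)
    (abelian_on (kerO sigma) /\
     (forall g : G, ~~ kerO sigma g -> star g = g) /\
     (forall n a : G, kerO sigma n -> ~~ kerO sigma a ->
        star n = (a^-1 * n * a)%g /\ star n = (a * n * a^-1)%g))
  \/
    (* (2) *)
    (LC_group (kerO sigma) /\ LC_group (fun _ : G => true) /\
     exists s : G, unique_nonid_commutator s /\
       (exists g0 : G, ~~ kerO sigma g0 /\ center_of (fun _ => true) g0 /\
                       star g0 = (s * g0)%g) /\
       (forall g : G,
          let Zg := center_of (fun _ => true) g in
          let Ng := kerO sigma g in
          (((Ng /\ Zg) \/ (~ Ng /\ ~ Zg)) -> star g = g) /\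
          (~ ((Ng /\ Zg) \/ (~ Ng /\ ~ Zg)) -> star g = (s * g)%g)))).
Proof.
move=> char_F nonabelian star_invol sigma_orient [a0 Na0] ker_mul_star.
apply: iff_trans (FG_normal_iff_criterion star_invol sigma_orient ker_mul_star char_F) _.
split=> [crit | [case1 | case2]].
- case: (classic (abelian_on (kerO sigma))) => [abN | /not_abelian_on [m Nm [k Nk ncmk]]].
    by left; apply: criterion_kernel_abelian.
  by right; apply: (criterion_LC_form star_invol sigma_orient crit Nm Nk ncmk Na0).
- exact: kernel_abelian_form_criterion case1.
- exact: LC_form_criterion case2.
Qed.
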